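(* Let $\Gamma$ be a metric graph and $D$ a vertex-supported effective divisor on $\Gamma$. Then each vertex (0-dimensional cell) of the cell complex $|D|$ is an anchor cell.
   Context: A metric graph $\Gamma=(V,E)$ is a connected undirected graph whose edges have positive real lengths $M_e$. Divisors are finite formal $\mathbb{Z}$-combinations of points of $\Gamma$; effective means nonnegative coefficients, vertex-supported means support in $V$. A rational function is continuous, piecewise linear on edges with finitely many pieces and integer slopes; $(f)=\sum_x\mathrm{ord}_x(f)x$ with $\mathrm{ord}_x(f)$ the sum of outgoing slopes at $x$. $R(D)=\{f:D+(f)\ge 0\}$, $|D|=\{D+(f):f\in R(D)\}$. Cells of $|D|$: identifying each open edge $e$ with $(0,M_e)$, a cell is given by nonnegative integers $d_v$ ($v\in V$), ordered partitions $d_e=\sum_{i=1}^{r_e}d_e^i$ into positive integers on some edges, and integers $m_e$ ($e\in E$); $L\in|D|$ belongs to it iff $L(v)=d_v$, $L|_{e^\circ}=\sum_i d_e^i x_i$ with $0<x_1<\dots<x_{r_e}<M_e$ on edges with a partition and $L|_{e^\circ}=0$ otherwise, and each $f\in R(D)$ with $L=D+(f)$ has outgoing slope $m_e$ at $0\in e$. Elements of a cell are its representatives. For a representative $L$ of a cell $C$, with $I_L=\{x\in\Gamma\setminus V: L(x)>0\}$, $\dim C$ is one less than the number of connected components of $\Gamma\setminus I_L$. A divisor $L$ is an anchor divisor if for each edge of $\Gamma$ there is at most one interior point $x$ of that edge with $L(x)>0$. A cell of $|D|$ is an anchor cell if all its representatives are anchor divisors. *)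

From Stdlib Require Import Reals ZArith Relations.
From mathcomp Require Import ssreflect ssrbool ssrfun eqtype ssrnat seq fintype fingraph.

Set Implicit Arguments.
Unset Strict Implicit.
Unset Printing Implicit Defensive.

Local Open Scope R_scope.

(** * Metric graphs
    A finite connected (multi)graph with vertex set [mg_V], edge set [mg_E],
    each edge e oriented from [mg_src e] to [mg_tgt e] (this orientation is the
    identification of the open edge with (0, M_e), 0 corresponding to the source),
    and positive real lengths [mg_len e] = M_e. *)
Definition graph_adj (V E : finType) (src tgt : E -> V) : rel V :=
  fun u v => [exists e, ((src e == u) && (tgt e == v)) || ((src e == v) && (tgt e == u))].

Record metric_graph := MetricGraph {
  mg_V : finType;
  mg_E : finType;
  mg_src : mg_E -> mg_V;
  mg_tgt : mg_E -> mg_V;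
  mg_len : mg_E -> R;
  mg_len_pos : forall e, 0 < mg_len e;
  mg_connected : forall u v : mg_V, connect (graph_adj mg_src mg_tgt) u v
}.

Section MetricGraph.
Variable G : metric_graph.
Local Notation V := (mg_V G).
Local Notation E := (mg_E G).
Local Notation src := (@mg_src G).
Local Notation tgt := (@mg_tgt G).
Local Notation len := (@mg_len G).

(** Points of Γ: a vertex, or the point of coordinate t of the open edge e.
    Only the [valid_pt] ones (0 < t < M_e) are points of Γ. *)
Inductive pt : Type :=
| PV : V -> pt
| PE : E -> R -> pt.

Definition valid_pt (x : pt) : Prop :=
  match x with
  | PV _ => True
  | PE e t => 0 < t < len e
  end.

Definition on_edge (e : E) (x : pt) (a : R) : Prop :=
  (x = PV (src e) /\ a = 0) \/ (x = PV (tgt e) /\ a = len e) \/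
  (x = PE e a /\ 0 < a < len e).

(** Divisors: Z-valued functions on points (values at non-valid points are
    irrelevant). *)
Definition divisor := pt -> Z.

Definition effective (D : divisor) : Prop :=
  forall x, valid_pt x -> (0 <= D x)%Z.

Definition vertex_supported (D : divisor) : Prop :=
  forall e t, valid_pt (PE e t) -> D (PE e t) = 0%Z.

(** Rational functions: values on vertices and, on each closed edge
    [0, M_e], a function of the coordinate. *)
Record ratfun := RatFun {
  rf_v : V -> R;
  rf_e : E -> R -> R
}.

Definition is_ratfun (f : ratfun) : Prop :=
  (forall e, rf_e f e 0 = rf_v f (src e) /\ rf_e f e (len e) = rf_v f (tgt e)) /\
  (forall e, exists (n : nat) (a : nat -> R) (s : nat -> Z),
      a 0%N = 0 /\ a n = len e /\
      (forall i, (i < n)%N -> a i < a i.+1) /\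
      (forall i t, (i < n)%N -> a i <= t <= a i.+1 ->
          rf_e f e t = rf_e f e (a i) + IZR (s i) * (t - a i))).

Definition right_slope (g : R -> R) (t : R) (s : Z) : Prop :=
  exists eps, 0 < eps /\ forall h, 0 < h < eps -> g (t + h) = g t + IZR s * h.

Definition left_slope (g : R -> R) (t : R) (s : Z) : Prop :=
  exists eps, 0 < eps /\ forall h, 0 < h < eps -> g (t - h) = g t - IZR s * h.

Definition sumZ (l : seq Z) : Z := foldr Z.add 0%Z l.

(** [ord_at f x k]: ord_x(f) = k, the sum of outgoing slopes of f at x.
    The outgoing slope along e at its source end is the right slope at 0;
    at its target end it is minus the left slope at M_e. *)
Definition ord_at (f : ratfun) (x : pt) (k : Z) : Prop :=
  match x with
  | PE e t => exists sr sl : Z,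
      right_slope (rf_e f e) t sr /\ left_slope (rf_e f e) t sl /\ k = (sr - sl)%Z
  | PV v => exists sr sl : E -> Z,
      (forall e, right_slope (rf_e f e) 0 (sr e)) /\
      (forall e, left_slope (rf_e f e) (len e) (sl e)) /\
      k = (sumZ [seq sr e | e <- enum E & src e == v]
           - sumZ [seq sl e | e <- enum E & tgt e == v])%Z
  end.

Definition eq_plus_div (L D : divisor) (f : ratfun) : Prop :=
  forall x, valid_pt x -> ord_at f x (L x - D x)%Z.

Definition in_linsys (D L : divisor) : Prop :=
  exists f, is_ratfun f /\ eq_plus_div L D f /\ effective L.

(** Cell data: d_v, ordered partitions (possibly empty list = no partition),
    and slopes m_e. *)
Record cell_data := CellData {
  cd_v : V -> nat;
  cd_p : E -> seq nat;
  cd_m : E -> Z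
}.

Definition valid_cell_data (c : cell_data) : Prop :=
  forall e, all (fun d => 0 < d)%N (cd_p c e).

Definition in_cell (D : divisor) (c : cell_data) (L : divisor) : Prop :=
  in_linsys D L /\
  (forall v, L (PV v) = Z.of_nat (cd_v c v)) /\
  (forall e, exists xs : seq R,
      size xs = size (cd_p c e) /\
      (forall i, (i < size xs)%N -> 0 < nth 0 xs i < len e) /\
      (forall i j, (i < j)%N -> (j < size xs)%N -> nth 0 xs i < nth 0 xs j) /\
      (forall i, (i < size xs)%N -> L (PE e (nth 0 xs i)) = Z.of_nat (nth 0%N (cd_p c e) i)) /\
      (forall t, 0 < t < len e -> (forall i, (i < size xs)%N -> t <> nth 0 xs i) ->
          L (PE e t) = 0%Z)) /\
  (forall f, is_ratfun f -> eq_plus_div L D f -> effective L ->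
      forall e, right_slope (rf_e f e) 0 (cd_m c e)).

Definition interior_supp (L : divisor) (x : pt) : Prop :=
  exists e t, x = PE e t /\ 0 < t < len e /\ (0 < L x)%Z.

Definition seg_step (I : pt -> Prop) (x y : pt) : Prop :=
  valid_pt x /\ ~ I x /\ valid_pt y /\ ~ I y /\
  exists e a b, on_edge e x a /\ on_edge e y b /\
    forall t, Rmin a b < t < Rmax a b -> ~ I (PE e t).

Definition n_components (I : pt -> Prop) (n : nat) : Prop :=
  exists comp : pt -> nat,
    (forall x, valid_pt x -> ~ I x -> (comp x < n)%N) /\
    (forall k, (k < n)%N -> exists x, valid_pt x /\ ~ I x /\ comp x = k) /\
    (forall x y, valid_pt x -> ~ I x -> valid_pt y -> ~ I y ->
       (comp x = comp y <-> clos_refl_sym_trans pt (seg_step I) x y)).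

Definition cell_dim (D : divisor) (c : cell_data) (k : nat) : Prop :=
  exists L, in_cell D c L /\ n_components (interior_supp L) k.+1.

Definition anchor_divisor (L : divisor) : Prop :=
  forall e t1 t2, 0 < t1 < len e -> 0 < t2 < len e ->
    (0 < L (PE e t1))%Z -> (0 < L (PE e t2))%Z -> t1 = t2.

Definition anchor_cell (D : divisor) (c : cell_data) : Prop :=
  forall L, in_cell D c L -> anchor_divisor L.

End MetricGraph.

(** In a representative [L] of a 0-dimensional cell, Γ minus the interior
    support [I_L] is connected.  If some edge carried chips at two interior
    points [a < b], the open segment between them, bounded on both sides by
    points of [I_L], would contain points of Γ \ I_L that cannot be joined to
    the vertices.  Hence every partition of a 0-dimensional cell has at most one
    part, i.e. each representative has at most one chip point per open edge. *)

From Stdlib Require Import Reals ZArith Lra Lia Classical Relations.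
From mathcomp Require Import ssreflect ssrbool eqtype ssrnat seq fintype.

Set Implicit Arguments.
Unset Strict Implicit.
Unset Printing Implicit Defensive.

Local Open Scope R_scope.

Lemma Rmin_Rmax_between u v t : u < t < v \/ v < t < u -> Rmin u v < t < Rmax u v.
Proof. by unfold Rmin, Rmax; case: Rle_dec; lra. Qed.

Section SegmentSteps.
Variable G : metric_graph.

Lemma seg_step_sym (I : pt G -> Prop) x y : seg_step I x y -> seg_step I y x.
Proof.
move=> [vx [nIx [vy [nIy [e' [ax [ay [ex [ey seg]]]]]]]]].
do 4 (split => //); exists e', ay, ax; do 2 (split => //).
by move=> t; rewrite Rmin_comm Rmax_comm; apply: seg.
Qed.

Lemma interior_supp_PE (L : divisor G) e t :
  0 < t < mg_len e -> (0 < L (PE e t))%Z -> interior_supp L (PE e t).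
Proof. by move=> ht hL; exists e, t. Qed.

End SegmentSteps.

Section Gap.
Variables (G : metric_graph) (L : divisor G) (e : mg_E G) (a b : R).
Hypotheses (a_gt0 : 0 < a) (b_lt_len : b < mg_len e) (a_lt_b : a < b).
Hypotheses (La : (0 < L (PE e a))%Z) (Lb : (0 < L (PE e b))%Z).

Definition in_gap (x : pt G) : Prop := exists t, x = PE e t /\ a < t < b.

Lemma seg_step_gap x y : seg_step (interior_supp L) x y -> in_gap x -> in_gap y.
Proof.
have Ia : interior_supp L (PE e a) by apply: interior_supp_PE => //; lra.
have Ib : interior_supp L (PE e b) by apply: interior_supp_PE => //; lra.
move=> [_ [_ [_ [nIy [e' [ax [ay [ex [ey seg]]]]]]]]] [tx [x_eq htx]]; subst x.
have [? ?] : e' = e /\ ax = tx.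
  by case: ex => [[//]|[[//]|[[-> ->] _]]].
subst e' ax.
have avoid t : t = a \/ t = b -> tx < t < ay \/ ay < t < tx -> False.
  by move=> tab ht; apply: (seg t (Rmin_Rmax_between ht)); case: tab => ->.
case: ey => [[_ ay_eq]|[[_ ay_eq]|[y_eq hay]]].
- by exfalso; apply: (avoid a); lra.
- by exfalso; apply: (avoid b); lra.
- subst y.
  case: (Rle_lt_dec ay a) => [hle|hgt].
    case: (Req_dec ay a) => [eq_a|]; first by move: nIy; rewrite eq_a.
    by move=> ?; exfalso; apply: (avoid a); lra.
  case: (Rle_lt_dec b ay) => [hge|hlt]; last by exists ay; split => //; lra.
  case: (Req_dec ay b) => [eq_b|]; first by move: nIy; rewrite eq_b.
  by move=> ?; exfalso; apply: (avoid b); lra.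
Qed.

Lemma connected_gap x y :
  clos_refl_sym_trans (pt G) (seg_step (interior_supp L)) x y ->
  in_gap x <-> in_gap y.
Proof.
elim=> {x y} [x y xy | x | x y _ IH | x y z _ IHxy _ IHyz].
- by split; apply: seg_step_gap => //; apply: seg_step_sym.
- by [].
- by rewrite IH.
- by rewrite IHxy.
Qed.

Lemma gap_disconnects y :
  valid_pt y -> ~ interior_supp L y -> in_gap y ->
  ~ n_components (interior_supp L) 1.
Proof.
move=> vy nIy gy [comp [comp_lt [_ comp_conn]]].
have nIv : ~ interior_supp L (PV (mg_src e)) by move=> [? [? []]].
have same_comp : comp y = comp (PV (mg_src e)).
  have := comp_lt _ vy nIy; have := comp_lt (PV (mg_src e)) I nIv.
  by rewrite !ltnS !leqn0 => /eqP -> /eqP ->.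
have /connected_gap conn := proj1 (comp_conn _ (PV (mg_src e)) vy nIy I nIv) same_comp.
by have [t [] //] := proj1 conn gy.
Qed.

End Gap.

Section Cells.
Variables (G : metric_graph) (D : divisor G) (c : cell_data G) (L : divisor G).
Hypothesis L_in_c : in_cell D c L.

Lemma one_component_partition_size e :
  valid_cell_data c -> n_components (interior_supp L) 1 ->
  (size (cd_p c e) <= 1)%N.
Proof.
move=> c_valid one_comp; rewrite leqNgt; apply/negP => size_gt1.
case: L_in_c => _ [_ [edges _]].
have [xs [size_xs [xs_in [xs_sorted [L_xs L_off]]]]] := edges e.
have i0 : (0 < size xs)%N by rewrite size_xs ltnW.
have i1 : (1 < size xs)%N by rewrite size_xs.
have L_pos i : (i < size xs)%N -> (0 < L (PE e (nth 0%R xs i)))%Z.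
  move=> hi; rewrite L_xs //.
  have := all_nthP 0%N (c_valid e) i; rewrite -size_xs => /(_ hi) /ltP; lia.
have [a_gt0 a_lt] := xs_in _ i0.
have [b_gt0 b_lt] := xs_in _ i1.
have a_lt_b := xs_sorted 0%N 1%N isT i1.
set a := nth 0 xs 0 in a_gt0 a_lt a_lt_b.
set b := nth 0 xs 1 in b_gt0 b_lt a_lt_b.
set m := (a + b) / 2.
have m_free : L (PE e m) = 0%Z.
  apply: L_off; first by rewrite /m; lra.
  move=> [|[|i]] hi; rewrite /m; [rewrite -/a; lra | rewrite -/b; lra |].
  by have := xs_sorted 1%N i.+2 isT hi; rewrite -/b; lra.
apply: (@gap_disconnects G L e a b) (PE e m) _ _ _ one_comp => //.
- exact: L_pos.
- exact: L_pos.
- by rewrite /= /m; lra.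
- by move=> [? [? [_ [_]]]]; rewrite m_free.
- by exists m; split => //; rewrite /m; lra.
Qed.

Lemma anchor_of_partition_size :
  (forall e, (size (cd_p c e) <= 1)%N) -> anchor_divisor L.
Proof.
move=> size_le1 e t1 t2 ht1 ht2 L1 L2.
case: L_in_c => _ [_ [edges _]].
have [xs [size_xs [_ [_ [_ L_off]]]]] := edges e.
have listed t : 0 < t < mg_len e -> (0 < L (PE e t))%Z -> t = nth 0 xs 0.
  move=> ht Lt; apply: NNPP => t_new.
  suff : L (PE e t) = 0%Z by lia.
  apply: L_off => // i hi t_eq; apply: t_new; rewrite t_eq.
  by move: hi; rewrite size_xs => /leq_trans/(_ (size_le1 e)); case: i {t_eq}.
by rewrite (listed _ ht1 L1) (listed _ ht2 L2).
Qed.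

End Cells.

Theorem lemma2p10 (G : metric_graph) (D : divisor G) :
  effective D -> vertex_supported D ->
  forall c : cell_data G, valid_cell_data c ->
  cell_dim D c 0 -> anchor_cell D c.
Proof.
(* Only the connectedness of Γ \ I_L matters. *)
move=> _ _ c c_valid [L0 [L0_in one_comp]] L L_in.
apply: anchor_of_partition_size L_in _ => e.
exact: one_component_partition_size L0_in e c_valid one_comp.
Qed.
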